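(* Let $0<t_0\le 1/\max_j|\bar c_j|$. Then for every $v\in\mathrm{W}^{2,p}_0([0,t_0],\mathbb{C}^m)$ the function $x:[0,t_0]\to X^i$ given by $x(t)=(P^i_+S_t-P^i_-R_t)v$, i.e. \[ x(t)(s)=P^i_+\bigl(\hat v_j(t-\tfrac{1-s}{|\bar c_j|})\bigr)_{j=1}^m-P^i_-\bigl(\hat v_j(t-\tfrac{s}{|\bar c_j|})\bigr)_{j=1}^m,\quad s\in[0,1], \] ($\hat v$ the extension of $v$ by $0$ to $\mathbb{R}$) is a classical solution of the boundary control system \[ \dot x(t)=A_m^i x(t),\quad L^i x(t)=v(t)\quad(0\le t\le t_0),\qquad x(0)=0. \]
   Context: Fix $p\in[1,\infty)$, $m\in\mathbb{N}$, $X^i=\mathrm{L}^p([0,1],\mathbb{C}^m)$. Let $\bar c_1,\dots,\bar c_m$ be nonzero real numbers, $\bar C=\operatorname{diag}(\bar c_1,\dots,\bar c_m)$, and $P^i_\pm$ the diagonal coordinate projections onto the coordinates $j$ with $\pm\bar c_j>0$. $A_m^i f=\bar C f'$ with $D(A_m^i)=\mathrm{W}^{1,p}([0,1],\mathbb{C}^m)$, and $L^i:D(A^i_m)\to\mathbb{C}^m$, $L^if=f(1)-f(0)$. A classical solution is a function $x\in\mathrm{C}^1([0,t_0],X^i)$ with $x(t)\in D(A^i_m)$ for all $t$, $t\mapsto A^i_mx(t)$ continuous, satisfying the stated equations. *)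

From HB Require Import structures.
From mathcomp Require Import all_boot all_order all_algebra.
From mathcomp Require Import all_classical all_reals all_analysis.
From mathcomp Require complex.
Import complex.ComplexField.
Set Implicit Arguments. Unset Strict Implicit. Unset Printing Implicit Defensive.
Import Order.TTheory GRing.Theory Num.Theory.
Import numFieldNormedType.Exports.
Local Open Scope classical_set_scope.
Local Open Scope ring_scope.

(* Complex numbers C = R[i] (mathcomp real_closed complex), C^m = 'I_m -> C.
   Only the real-linear structure of C is used (the c_j are real).          *)
Notation cplx R := (complex.complex R).
Definition rC (R : realType) (r : R) : cplx R := complex.Complex r 0.

Definition cmnorm (R : realType) (m : nat) (z : 'I_m -> cplx R) : R :=
  Num.sqrt (\sum_(j < m) (complex.Re (z j) ^+ 2 + complex.Im (z j) ^+ 2)).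

Definition Icc (R : realType) (a b : R) : set R := [set s | a <= s <= b].

Definition cm_measurable (R : realType) (m : nat) (D : set R)
  (f : R -> 'I_m -> cplx R) : Prop :=
  forall j, measurable_fun D (fun s => complex.Re (f s j)) /\
            measurable_fun D (fun s => complex.Im (f s j)).

Definition Lp_pow (R : realType) (m : nat) (p : R) (D : set R)
  (f : R -> 'I_m -> cplx R) : \bar R :=
  (\int[@lebesgue_measure R]_(s in D) ((cmnorm (f s)) `^ p)%:E)%E.

Definition memLp (R : realType) (m : nat) (p : R) (D : set R)
  (f : R -> 'I_m -> cplx R) : Prop :=
  cm_measurable D f /\ (Lp_pow p D f < +oo)%E.

Definition cintegral (R : realType) (m : nat) (D : set R)
  (f : R -> 'I_m -> cplx R) : 'I_m -> cplx R :=
  fun j => complex.Complex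
    (Rintegral (@lebesgue_measure R) D (fun s => complex.Re (f s j)))
    (Rintegral (@lebesgue_measure R) D (fun s => complex.Im (f s j))).

(* F(s) = F(a) + \int_a^s G  for all s in [a,b]:  F is the (absolutely
   continuous) primitive of G on [a,b], i.e. G is the weak derivative of F *)
Definition primitive_on (R : realType) (m : nat) (a b : R)
  (F G : R -> 'I_m -> cplx R) : Prop :=
  forall s, a <= s <= b -> F s = (fun j => F a j + cintegral (Icc a s) G j).

(* v in W^{2,p}_0([0,t0], C^m): v = \int_0 v1, v1 = \int_0 v2 with v2 in L^p,
   and v, v' vanish at both endpoints (v is its continuous representative) *)
Definition W2p0 (R : realType) (m : nat) (p t0 : R)
  (v : R -> 'I_m -> cplx R) : Prop :=
  exists v1 v2 : R -> 'I_m -> cplx R,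
    memLp p (Icc 0 t0) v2 /\
    (forall s, 0 <= s <= t0 ->
       v1 s = cintegral (Icc 0 s) v2 /\ v s = cintegral (Icc 0 s) v1) /\
    v t0 = 0 /\ v1 t0 = 0.

Definition vhat (R : realType) (m : nat) (t0 : R) (v : R -> 'I_m -> cplx R)
  : R -> 'I_m -> cplx R :=
  fun r => if 0 <= r <= t0 then v r else 0.

Definition xsol (R : realType) (m : nat) (c : 'I_m -> R) (t0 : R)
  (v : R -> 'I_m -> cplx R) : R -> R -> 'I_m -> cplx R :=
  fun t s j =>
    (if 0 < c j then vhat t0 v (t - (1 - s) / `|c j|) j else 0)
    - (if c j < 0 then vhat t0 v (t - s / `|c j|) j else 0).

(* Classical solution on [0,t0] of  x' = A_m x,  L x = v,  x(0) = 0,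
   with X = L^p([0,1],C^m), A_m f = C f' on D(A_m) = W^{1,p}([0,1],C^m),
   L f = f(1) - f(0).  For each t, F t is the W^{1,p} (absolutely continuous)
   representative of x(t) and G t its derivative, so A_m x(t) = C (G t).
   x is C^1 into X with derivative A_m x(t), and t |-> A_m x(t) is continuous. *)
Definition classical_solution (R : realType) (m : nat) (p : R)
  (c : 'I_m -> R) (t0 : R) (v : R -> 'I_m -> cplx R)
  (x : R -> R -> 'I_m -> cplx R) : Prop :=
  (forall t, Icc 0 t0 t -> memLp p (Icc 0 1) (x t)) /\
  exists F G : R -> R -> 'I_m -> cplx R,
    (forall t, Icc 0 t0 t ->
       memLp p (Icc 0 1) (G t) /\ primitive_on 0 1 (F t) (G t) /\
       {ae @lebesgue_measure R, forall s, Icc 0 1 s -> F t s = x t s}) /\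
    (forall t, Icc 0 t0 t ->
       (Lp_pow p (Icc 0 1)
          (fun s j => rC (t' - t)^-1 * (x t' s j - x t s j) - rC (c j) * G t s j)
        @[t' --> within (Icc 0 t0) t^'] --> 0%E)) /\
    (forall t, Icc 0 t0 t ->
       (Lp_pow p (Icc 0 1) (fun s j => rC (c j) * G t' s j - rC (c j) * G t s j)
        @[t' --> within (Icc 0 t0) (nbhs t)] --> 0%E)) /\
    (forall t, Icc 0 t0 t -> (fun j => F t 1 j - F t 0 j) = v t) /\
    Lp_pow p (Icc 0 1) (x 0) = 0%E.

From mathcomp Require Import all_boot all_order all_algebra.
From mathcomp Require Import all_classical all_reals all_analysis.
From mathcomp Require complex.
From mathcomp Require Import measurable_realfun ring lra.
Import complex.ComplexField.
Import Order.TTheory GRing.Theory Num.Theory.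
Import numFieldNormedType.Exports.
Local Open Scope classical_set_scope.
Local Open Scope ring_scope.

(** The j-th component of x(t)(s) is ±v̂_j(t - d_j(s)), where d_j(s) >= 0 is
   the time the j-th characteristic needs to carry the boundary value to s;
   d_j is affine in s.  Since v is in W^{2,p}_0, the zero extension v̂ is C^1 on
   R, its derivative is the zero extension of v' = ∫ v'' and is uniformly
   continuous, and v̂ vanishes on ]-oo, 0].  Hence x(t) is C^1 in s with
   derivative G(t)(s)_j = |c_j|^-1 v̂'_j(t - d_j(s)); by the mean value theorem
   the difference quotients of x in t converge to C G(t) uniformly in s, and
   uniform convergence on [0,1] gives convergence in L^p.  The boundary
   condition holds because t - 1/|c_j| <= 0 for t <= t0, and x(0) = 0 because
   d_j >= 0.  Complex vectors are handled through their 2m real coordinates. *)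

Section real_and_imaginary_parts.
Context {R : realType}.

Definition reim (b : bool) (z : cplx R) : R :=
  if b then complex.Re z else complex.Im z.

Lemma reim0 b : reim b 0 = 0.
Proof. by case: b. Qed.

Lemma reimD b (z w : cplx R) : reim b (z + w) = reim b z + reim b w.
Proof. by case: b; case: z; case: w. Qed.

Lemma reimB b (z w : cplx R) : reim b (z - w) = reim b z - reim b w.
Proof. by case: b; case: z; case: w. Qed.

Lemma reimZ b (r : R) (z : cplx R) : reim b (rC r * z) = r * reim b z.
Proof. by case: b; case: z => x y /=; ring. Qed.

Lemma reim_inj (z w : cplx R) : (forall b, reim b z = reim b w) -> z = w.
Proof. by case: z => x y; case: w => x' y' H; move: (H true) (H false) => /= -> ->. Qed.

Lemma reim_cintegral m (D : set R) (f : R -> 'I_m -> cplx R) j b :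
  reim b (cintegral D f j) = \int[@lebesgue_measure R]_(s in D) reim b (f s j).
Proof. by case: b. Qed.

Lemma reim_vhatE m t0 (u : R -> 'I_m -> cplx R) j b r :
  reim b (vhat t0 u r j) = ((fun s => reim b (u s j)) \_ `[0, t0]) r.
Proof.
by rewrite patchE /vhat mem_setE /= in_itv /=; case: ifP => //; rewrite reim0.
Qed.

Lemma reim_vhat m t0 (u : R -> 'I_m -> cplx R) j b :
  (fun r => reim b (vhat t0 u r j)) = (fun s => reim b (u s j)) \_ `[0, t0].
Proof. by apply/funext => r; exact: reim_vhatE. Qed.

End real_and_imaginary_parts.

Section real_functions.
Context {R : realType}.
Notation mu := (@lebesgue_measure R).
Implicit Types (f g F : R -> R).

Lemma IccE (a b : R) : Icc a b = `[a, b]%classic.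
Proof. by apply/seteqP; split=> x; rewrite /Icc /= in_itv. Qed.

Lemma Icc_id (a : R) : Icc a a = [set a].
Proof.
apply/seteqP; split=> x /=; rewrite /Icc; last by move=> ->; rewrite /= lexx.
by move=> /andP[ax xa]; apply: le_anti; rewrite xa ax.
Qed.

Definition uniformly_continuous f := forall e : R, 0 < e ->
  exists2 d : R, 0 < d & forall a b, `|a - b| < d -> `|f a - f b| < e.

Lemma uniformly_continuous_continuous {f} :
  uniformly_continuous f -> continuous f.
Proof.
move=> uf x; apply/cvgrPdist_lt => e e0; have [d d0 hd] := uf e e0.
by apply/nbhs_ballP; exists d => // y; rewrite /ball /=; exact: hd.
Qed.

Lemma is_derive1_continuous {F f} :
  (forall y : R, is_derive y 1 F (f y)) -> continuous F.
Proof.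
move=> dF y; have dFy := dF y.
by apply: differentiable_continuous; apply/derivable1_diffP; exact: ex_derive.
Qed.

Lemma MVT_abs {F f} b h : (forall y : R, is_derive y 1 F (f y)) ->
  exists2 z, `|z - b| <= `|h| & F (b + h) - F b = f z * h.
Proof.
move=> dF; have cF := continuous_subspaceT (is_derive1_continuous dF).
have [h0|h0] := leP 0 h.
  have [|z] := @MVT_segment _ F f b (b + h) _ (fun y _ => dF y) (cF _); first lra.
  rewrite in_itv /= => /andP[bz zb] ->; exists z; last by congr (_ * _); ring.
  by rewrite !ger0_norm //; lra.
have [|z] := @MVT_segment _ F f (b + h) b _ (fun y _ => dF y) (cF _); first lra.
rewrite in_itv /= => /andP[bz zb] E; exists z.
  by rewrite (ltr0_norm h0) ler0_norm; lra.
have -> : F (b + h) - F b = - (F b - F (b + h)) by ring.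
by rewrite E; ring.
Qed.

Lemma difference_quotient_uniform {F f} : (forall y : R, is_derive y 1 F (f y)) ->
  uniformly_continuous f -> forall e, 0 < e -> exists2 d : R, 0 < d &
  forall b h, h != 0 -> `|h| < d -> `|h^-1 * (F (b + h) - F b) - f b| <= e.
Proof.
move=> dF uf e e0; have [d d0 hd] := uf e e0; exists d => // b h h0 hd'.
have [z zb ->] := MVT_abs b h dF.
by rewrite mulrC mulfK // ltW // hd // (le_lt_trans zb).
Qed.

Lemma is_derive_affine_comp {F f} (a k u : R) : (forall y : R, is_derive y 1 F (f y)) ->
  is_derive u 1 (fun s => F (a + k * s)) (k * f (a + k * u)).
Proof.
move=> dF; pose A s := a + k * s.
have dAu : is_derive u 1 A k.
  have -> : A = cst a + k \*: id by apply/funext => s.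
  by apply: is_derive_eq; rewrite // add0r /GRing.scale /= mulr1.
have dFAu := dF (A u).
have dFA : derivable (F \o A) u 1.
  by apply/derivable1_diffP/differentiable_comp; apply/derivable1_diffP.
apply: is_derive_eq (derivableP dFA) _.
rewrite -derive1E derive1_comp; [|exact: ex_derive|exact: ex_derive].
rewrite !derive1E (@derive_val _ _ _ _ _ _ _ dFAu) (@derive_val _ _ _ _ _ _ _ dAu).
exact: mulrC.
Qed.

Lemma continuous_affine_comp F (a k : R) :
  continuous F -> continuous (fun s => F (a + k * s)).
Proof.
move=> cF s; apply: continuous_comp; last exact: cF.
by apply: cvgD; [exact: cvg_cst | apply: cvgM; [exact: cvg_cst | exact: cvg_id]].
Qed.

Lemma Rintegral_Icc_derive {F f a b} : (forall u : R, is_derive u 1 F (f u)) ->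
  continuous f -> a <= b -> F b = F a + \int[mu]_(u in Icc a b) f u.
Proof.
move=> dF cf; rewrite le_eqVlt => /predU1P[<-|ab].
  by rewrite Icc_id Rintegral_set1 addr0.
have cF := is_derive1_continuous dF.
have DF : derivable_oo_LRcontinuous F a b.
  split; [move=> u _ | exact/cvg_at_right_filter/cF | exact/cvg_at_left_filter/cF].
  by have dFu := dF u; exact: ex_derive.
have F'f : {in `]a, b[, (F^`())%classic =1 f}.
  by move=> u _; have dFu := dF u; rewrite derive1E derive_val.
rewrite IccE /Rintegral (continuous_FTC2 ab (continuous_subspaceT cf) DF F'f) /=.
by ring.
Qed.

Lemma bounded_fin_family {I : finType} (f : I -> R -> R) :
  (forall i, exists M, forall r, `|f i r| <= M) ->
  exists M, forall i r, `|f i r| <= M.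
Proof.
move=> fb; have /filter_ex[M hM] : \forall M \near +oo, forall i r, `|f i r| <= M.
  apply: filter_forall => i; have [Mi hMi] := fb i.
  near=> M => r; apply: le_trans (hMi r) _.
  by near: M; apply: nbhs_pinfty_ge; exact: num_real.
by exists M.
Unshelve. all: by end_near.
Qed.

Lemma near_within_dnbhs {D : set R} {t d : R} {P : R -> Prop} : 0 < d ->
  (forall t', t' != t -> `|t - t'| < d -> P t') -> \forall t' \near within D t^', P t'.
Proof.
move=> d0 dP; apply/nbhs_ballP; exists d => // t' /= tt' t't _.
exact: dP.
Qed.

Lemma near_within_nbhs {D : set R} {t d : R} {P : R -> Prop} : 0 < d ->
  (forall t', `|t - t'| < d -> P t') -> \forall t' \near within D (nbhs t), P t'.
Proof.
move=> d0 dP; apply/nbhs_ballP; exists d => // t' /= tt' _.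
exact: dP.
Qed.

End real_functions.

Section zero_extension.
Context {R : realType}.
Notation mu := (@lebesgue_measure R).
Implicit Types (g h : R -> R).

Lemma patch_Icc_primitive {g h t0} : 0 <= t0 ->
  (forall s, 0 <= s <= t0 -> h s = \int[mu]_(u in Icc 0 s) g u) -> h t0 = 0 ->
  h \_ `[0, t0] = fun y => \int[mu]_(u in `]-oo, y]) (g \_ `[0, t0]) u.
Proof.
move=> t0_ge0 hE ht0; apply/funext => y; rewrite -Rintegral_mkcondr.
have cap_Icc s : s <= t0 -> `]-oo, s] `&` `[0, t0] = Icc 0 s.
  move=> st0; apply/seteqP; split=> x /=; rewrite /Icc !in_itv /=.
    by move=> [xs /andP[x0 _]]; rewrite x0 xs.
  by move=> /andP[x0 xs]; split => //; rewrite x0 /=; lra.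
have [/andP[y0 yt0]|yNI] := boolP (0 <= y <= t0).
  by rewrite patchT ?hE ?y0 ?yt0 ?cap_Icc // inE /= in_itv /= y0.
rewrite patchC; last by rewrite inE /= in_itv /=; exact/negP.
have [yt0|t0y] := leP y t0.
  move: yNI; rewrite yt0 andbT -ltNge => y0.
  rewrite (_ : _ `&` _ = set0) ?Rintegral_set0 //.
  by apply/seteqP; split=> x //=; rewrite !in_itv /= => -[xy /andP[x0 _]]; lra.
transitivity (h t0); first by rewrite ht0.
rewrite hE ?lexx ?t0_ge0 // -cap_Icc //; congr Rintegral.
by apply/seteqP; split=> x /=; rewrite !in_itv /= => -[_ /[dup] /andP[_ xt0] ->];
  split => //; lra.
Qed.

Lemma integrable_patch g (D : set R) : measurable D ->
  mu.-integrable D (EFin \o g) -> mu.-integrable setT (EFin \o (g \_ D)).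
Proof.
by move=> mD ig; rewrite -restrict_EFin; apply/integrable_restrict; rewrite ?setTI.
Qed.

Lemma integral_itvNy_uniformly_continuous g : mu.-integrable setT (EFin \o g) ->
  uniformly_continuous (fun y => \int[mu]_(u in `]-oo, y]) g u).
Proof.
move=> ig e e0; have [d [d0 hd]] := integral_normr_continuous ig e0.
exists d => // a b; wlog ab : a b / a <= b.
  move=> H; have [/H //|/ltW ba] := leP a b.
  by rewrite distrC => abd; rewrite distrC; exact: H.
move=> abd; rewrite distrC (@Rintegral_itvB _ _ -oo%O (BRight b) a) //; last first.
  exact: integrableS ig.
rewrite (le_lt_trans (le_normr_Rintegral _ _)) //; first exact: integrableS ig.
apply: hd => //; rewrite [X in (X < _)%E]lebesgue_measure_itv /=.
case: ifP => _; last by rewrite lte_fin.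
by rewrite -EFinD lte_fin; rewrite distrC ger0_norm ?subr_ge0 in abd.
Qed.

Lemma integral_itvNy_is_derive g (x : R) : continuous g ->
  mu.-integrable setT (EFin \o g) ->
  is_derive x 1 (fun y => \int[mu]_(u in `]-oo, y]) g u) (g x).
Proof.
move=> cg ig; have x_lt : x < x + 1 by rewrite ltrDl.
have igx : mu.-integrable `]-oo, x + 1] (EFin \o g) by exact: integrableS ig.
have [dG <-] := continuous_FTC1 x_lt igx (ltNyr x) (cg x).
by rewrite derive1E; exact: derivableP.
Qed.

Lemma patch_Icc_bounded {h a b} : a <= b -> continuous (h \_ `[a, b]) ->
  exists M, forall r, `|(h \_ `[a, b]) r| <= M.
Proof.
move=> ab ch; have cnh : continuous (fun r => `|(h \_ `[a, b]) r|).
  by move=> r; apply: continuous_comp; [exact: ch | exact: norm_continuous].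
have [r0 _ hr0] := EVT_max ab (continuous_subspaceT cnh).
exists `|(h \_ `[a, b]) r0| => r; have [rI|rNI] := boolP (r \in `[a, b]).
  exact: hr0.
by rewrite patchC ?normr0 // inE /=; exact/negP.
Qed.

End zero_extension.

Section Lp_norm.
Context {R : realType} {m : nat}.
Notation mu := (@lebesgue_measure R).
Implicit Types (z : 'I_m -> cplx R) (f g : R -> 'I_m -> cplx R).

Lemma reim_le_cmnorm z j b : `|reim b (z j)| <= cmnorm z.
Proof.
have zj : reim b (z j) ^+ 2 <= complex.Re (z j) ^+ 2 + complex.Im (z j) ^+ 2.
  by case: b; rewrite /= ?lerDl ?lerDr sqr_ge0.
have S : complex.Re (z j) ^+ 2 + complex.Im (z j) ^+ 2 <=
    \sum_(i < m) (complex.Re (z i) ^+ 2 + complex.Im (z i) ^+ 2).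
  by rewrite (bigD1 j) //= lerDl sumr_ge0 // => i _; rewrite addr_ge0 ?sqr_ge0.
rewrite /cmnorm -sqrtr_sqr ler_sqrt ?(le_trans zj S) //.
by apply: le_trans S; rewrite addr_ge0 ?sqr_ge0.
Qed.

Lemma cmnorm_le z e : 0 <= e -> (forall j b, `|reim b (z j)| <= e) ->
  cmnorm z <= (2 * m%:R + 1) * e.
Proof.
move=> e0 ze; have K0 : 0 <= (2 * m%:R + 1) * e by rewrite mulr_ge0 // addr_ge0.
rewrite /cmnorm -(ger0_norm K0) -sqrtr_sqr ler_sqrt ?sqr_ge0 //.
apply: (@le_trans _ _ (\sum_(j < m) (e ^+ 2 + e ^+ 2))).
  apply: ler_sum => j _; have sqr_le b : reim b (z j) ^+ 2 <= e ^+ 2.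
    by rewrite -real_normK ?num_real // lerXn2r ?nnegrE.
  exact: (lerD (sqr_le true) (sqr_le false)).
rewrite sumr_const card_ord -mulr_natr.
have : 0 <= m%:R :> R by []; nra.
Qed.

Lemma cm_measurableP (D : set R) f : cm_measurable D f <->
  forall j b, measurable_fun D (fun s => reim b (f s j)).
Proof.
split=> [mf j [] | mf j]; [exact: (mf j).1 | exact: (mf j).2 |].
exact: (conj (mf j true) (mf j false)).
Qed.

Lemma cm_measurable_continuous (D : set R) f :
  (forall j b, continuous (fun s => reim b (f s j))) -> cm_measurable D f.
Proof.
move=> cf; apply/cm_measurableP => j b.
exact: measurable_funS measurableT (subsetT D) (continuous_measurable_fun (cf j b)).
Qed.

Lemma cm_measurableB (D : set R) f g : cm_measurable D f -> cm_measurable D g ->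
  cm_measurable D (fun s j => f s j - g s j).
Proof.
move=> /cm_measurableP mf /cm_measurableP mg; apply/cm_measurableP => j b.
under eq_fun do rewrite reimB; exact: measurable_funB.
Qed.

Lemma cm_measurableZ (D : set R) (a : 'I_m -> R) f : cm_measurable D f ->
  cm_measurable D (fun s j => rC (a j) * f s j).
Proof.
move=> /cm_measurableP mf; apply/cm_measurableP => j b.
under eq_fun do rewrite reimZ; exact: measurable_funM.
Qed.

Lemma measurable_cmnorm_powR (D : set R) f p : cm_measurable D f ->
  measurable_fun D (EFin \o (fun s => cmnorm (f s) `^ p)).
Proof.
move=> /cm_measurableP mf; apply/measurable_EFinP.
apply: (measurableT_comp (measurable_powR p)).
apply: (measurableT_comp (continuous_measurable_fun (@sqrt_continuous R))).
apply: measurable_sum => j.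
by apply: measurable_funD; apply: measurable_funX;
  [exact: mf j true | exact: mf j false].
Qed.

Lemma Lp_pow_bounded {p e f} : 0 <= p -> 0 <= e -> cm_measurable (Icc 0 1) f ->
  (forall s, Icc 0 1 s -> forall j b, `|reim b (f s j)| <= e) ->
  (0 <= Lp_pow p (Icc 0 1) f <= (((2 * m%:R + 1) * e) `^ p)%:E)%E.
Proof.
move=> p0 e0 mf fe; apply/andP; split.
  by apply: integral_ge0 => s _; rewrite lee_fin powR_ge0.
rewrite /Lp_pow -[X in (_ <= X)%E]mule1.
have <- : mu (Icc 0 1) = 1%E.
  by rewrite IccE lebesgue_measure_itv /= lte01 oppr0 adde0.
rewrite -integral_cst ?IccE //; apply: ge0_le_integral => //.
- by move=> s _; rewrite lee_fin powR_ge0.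
- by rewrite -IccE; exact: measurable_cmnorm_powR.
- move=> s sI; rewrite lee_fin ge0_ler_powR // ?nnegrE ?sqrtr_ge0 //.
    by rewrite mulr_ge0 // addr_ge0.
  by apply: cmnorm_le => //; apply: fe; rewrite IccE.
Qed.

Lemma memLp_bounded p M f : 0 <= p -> cm_measurable (Icc 0 1) f ->
  (forall s, Icc 0 1 s -> forall j b, `|reim b (f s j)| <= M) ->
  memLp p (Icc 0 1) f.
Proof.
move=> p0 mf fM; split => //.
have fM' s sI j b : `|reim b (f s j)| <= `|M| := le_trans (fM s sI j b) (ler_norm M).
have /andP[_ le] := Lp_pow_bounded p0 (normr_ge0 M) mf fM'.
exact: le_lt_trans le (ltry _).
Qed.

Lemma Lp_pow_cvg0 p (F : set_system R) (FF : Filter F) (f : R -> R -> 'I_m -> cplx R) :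
  1 <= p -> (\forall t \near F, cm_measurable (Icc 0 1) (f t)) ->
  (forall e, 0 < e -> forall j b, \forall t \near F,
     forall s, Icc 0 1 s -> `|reim b (f t s j)| <= e) ->
  Lp_pow p (Icc 0 1) (f t) @[t --> F] --> 0%E.
Proof.
move=> p1 mf fjb; have p0 : 0 <= p by lra.
have fe e : 0 < e -> \forall t \near F,
    forall s, Icc 0 1 s -> forall j b, `|reim b (f t s j)| <= e.
  move=> e0; apply: filterS (filter_forall _ (fun j => filter_forall _ (fjb e e0 j))).
  by move=> t ft s sI j b; exact: ft.
have K0 : 0 < 2 * m%:R + 1 :> R by rewrite ltr_wpDl.
apply/fine_cvgP; split.
  apply: filterS2 mf (fe 1 ltr01) => t mft ft.
  have /andP[f0 f1] := Lp_pow_bounded p0 ler01 mft ft.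
  by rewrite ge0_fin_numE // (le_lt_trans f1) ?ltry.
apply/cvgrPdist_le => eps eps0.
have [eta eta0 /andP[eta1 etae]] :
    exists2 eta : R, 0 < eta & (eta <= 1) && (eta <= eps).
  by have [e1|e1] := leP eps 1; [exists eps | exists 1]; rewrite ?lexx ?e1 //= ltW.
have eta0' : 0 < eta / (2 * m%:R + 1) by apply: divr_gt0.
apply: filterS2 mf (fe _ eta0') => t mft ft.
have /andP[f0] := Lp_pow_bounded p0 (ltW eta0') mft ft.
rewrite mulrC divfK ?gt_eqF // => f1.
have fin : Lp_pow p (Icc 0 1) (f t) \is a fin_num.
  by rewrite ge0_fin_numE // (le_lt_trans f1) ?ltry.
rewrite sub0r normrN ger0_norm ?fine_ge0 // -lee_fin fineK // (le_trans f1) //.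
rewrite lee_fin (le_trans _ etae) // -{2}(powRr1 (ltW eta0)).
by rewrite ger_powR // eta1 eta0.
Qed.

Lemma Lp_pow_eq0 p (D : set R) f : p != 0 -> (forall s, D s -> f s = 0) ->
  Lp_pow p D f = 0%E.
Proof.
move=> p0 f0; rewrite /Lp_pow (eq_integral (fun _ => 0%E)) ?integral0 // => s.
rewrite inE => Ds; rewrite /cmnorm big1 ?sqrtr0 ?powR0 // => j _.
by rewrite f0 //= expr0n /= addr0.
Qed.

Lemma memLp_integrable {p a b f} : 1 <= p -> memLp p (Icc a b) f ->
  forall j b', mu.-integrable `[a, b] (EFin \o (fun s => reim b' (f s j))).
Proof.
rewrite IccE => p1 [mf fin] j b'; have /cm_measurableP mfc := mf.
apply/integrableP; split; first by apply/measurable_EFinP; exact: (mfc j b').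
have le1 s : `|reim b' (f s j)| <= 1 + cmnorm (f s) `^ p.
  have n0 : 0 <= cmnorm (f s) by rewrite sqrtr_ge0.
  apply: le_trans (reim_le_cmnorm _ _ _) _.
  have [n1|n1] := leP (cmnorm (f s)) 1; first by have := powR_ge0 (cmnorm (f s)) p; lra.
  have : cmnorm (f s) <= cmnorm (f s) `^ p.
    by rewrite -{1}(powRr1 n0) ler_powR // ltW.
  by have := powR_ge0 (cmnorm (f s)) p; lra.
apply: le_lt_trans (_ : (\int[mu]_(s in `[a, b]) ((1 + cmnorm (f s) `^ p)%:E) < +oo)%E).
  apply: ge0_le_integral => //.
  - by apply: measurableT_comp => //; apply/measurable_EFinP; exact: (mfc j b').
  - apply/measurable_EFinP; apply: measurable_funD; first exact: measurable_cst.
    by apply/measurable_EFinP; exact: measurable_cmnorm_powR.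
  - by move=> s _ /=; rewrite lee_fin.
under eq_integral do rewrite EFinD.
rewrite ge0_integralD //; last 2 first.
- by move=> s _; rewrite lee_fin powR_ge0.
- exact: measurable_cmnorm_powR.
rewrite lte_add_pinfty // integral_cst //.
rewrite [X in (_ * X)%E]lebesgue_measure_itv /=.
by case: ifP => _; rewrite ?mule0 ?mul1e -?EFinD ?ltry.
Qed.

End Lp_norm.

Section second_primitive.
Context {R : realType} {t0 : R} {g2 h1 h0 : R -> R}.
Notation mu := (@lebesgue_measure R).
Hypothesis t0_ge0 : 0 <= t0.
Hypothesis g2_int : mu.-integrable `[0, t0] (EFin \o g2).
Hypothesis h1E : forall s, 0 <= s <= t0 -> h1 s = \int[mu]_(u in Icc 0 s) g2 u.
Hypothesis h0E : forall s, 0 <= s <= t0 -> h0 s = \int[mu]_(u in Icc 0 s) h1 u.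
Hypotheses (h1_t0 : h1 t0 = 0) (h0_t0 : h0 t0 = 0).

Lemma patch_primitive_uniformly_continuous : uniformly_continuous (h1 \_ `[0, t0]).
Proof.
rewrite (patch_Icc_primitive t0_ge0 h1E h1_t0).
by apply: integral_itvNy_uniformly_continuous; exact: integrable_patch.
Qed.

Lemma patch_second_primitive_is_derive (y : R) :
  is_derive y 1 (h0 \_ `[0, t0]) ((h1 \_ `[0, t0]) y).
Proof.
have c1 := uniformly_continuous_continuous patch_primitive_uniformly_continuous.
have i1 : mu.-integrable `[0, t0] (EFin \o h1).
  have := continuous_compact_integrable (@segment_compact _ 0 t0)
    (continuous_subspaceT c1).
  by apply: eq_integrable => // s sI /=; rewrite patchT.
rewrite (patch_Icc_primitive t0_ge0 h0E h0_t0).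
by apply: integral_itvNy_is_derive => //; exact: integrable_patch.
Qed.

End second_primitive.

Lemma W2p0_vhat {R : realType} {m : nat} {p t0 : R} {v : R -> 'I_m -> cplx R} :
  1 <= p -> 0 <= t0 -> W2p0 p t0 v -> exists v1 : R -> 'I_m -> cplx R,
  [/\ forall j b (y : R), is_derive y 1 (fun r => reim b (vhat t0 v r j))
                                        (reim b (vhat t0 v1 y j)),
      forall j b, uniformly_continuous (fun r => reim b (vhat t0 v1 r j)) &
      forall y, y <= 0 -> vhat t0 v y = 0].
Proof.
move=> p1 t0_ge0 [v1 [v2 [v2_Lp [vE [vt0 v1t0]]]]]; exists v1.
have v1E j b s : 0 <= s <= t0 ->
    reim b (v1 s j) = \int[lebesgue_measure]_(u in Icc 0 s) reim b (v2 u j).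
  by move=> sI; rewrite (vE s sI).1 reim_cintegral.
have vE' j b s : 0 <= s <= t0 ->
    reim b (v s j) = \int[lebesgue_measure]_(u in Icc 0 s) reim b (v1 u j).
  by move=> sI; rewrite (vE s sI).2 reim_cintegral.
have reim_t0 (u : R -> 'I_m -> cplx R) j b : u t0 = 0 -> reim b (u t0 j) = 0.
  by move=> ->; exact: reim0.
have v2_int j b := memLp_integrable p1 v2_Lp j b.
split => [j b y | j b | y y_le0].
- rewrite reim_vhat reim_vhatE.
  by apply: (patch_second_primitive_is_derive t0_ge0 (v2_int j b) (v1E j b) (vE' j b));
    exact: reim_t0.
- rewrite reim_vhat.
  by apply: (patch_primitive_uniformly_continuous t0_ge0 (v2_int j b) (v1E j b));
    exact: reim_t0.
rewrite /vhat; case: ifPn => // /andP[y_ge0 _].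
have -> : y = 0 by apply: le_anti; rewrite y_le0.
apply/funext => j; apply: reim_inj => b.
by rewrite (vE 0 _).2 ?lexx // reim_cintegral Icc_id Rintegral_set1 reim0.
Qed.

Section characteristics.
Context {R : realType}.

Definition delay (cj s : R) : R :=
  if 0 < cj then (1 - s) / `|cj| else s / `|cj|.

Lemma delay_ge0 (cj s : R) : 0 <= s <= 1 -> 0 <= delay cj s.
Proof.
by move=> /andP[s0 s1]; rewrite /delay; case: ifP => _; rewrite divr_ge0 // subr_ge0.
Qed.

Lemma sub_delay (cj t s : R) : cj != 0 ->
  t - delay cj s = t - delay cj 0 + Num.sg cj / `|cj| * s.
Proof.
rewrite /delay; case: ltgtP => // [cj_gt0 | cj_lt0] _.
  by rewrite gtr0_sg //; ring.
by rewrite ltr0_sg //; ring.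
Qed.

Definition xsol_ds {m : nat} (c : 'I_m -> R) (t0 : R) (v1 : R -> 'I_m -> cplx R)
    (t s : R) : 'I_m -> cplx R :=
  fun j => rC `|c j|^-1 * vhat t0 v1 (t - delay (c j) s) j.

End characteristics.

Section transport.
Context {R : realType} {m : nat} {c : 'I_m -> R} {t0 : R} {v v1 : R -> 'I_m -> cplx R}.
Hypothesis c_neq0 : forall j, c j != 0.
Hypothesis t0_ge0 : 0 <= t0.
Hypothesis v_is_derive : forall j b (y : R),
  is_derive y 1 (fun r => reim b (vhat t0 v r j)) (reim b (vhat t0 v1 y j)).
Hypothesis v1_unif :
  forall j b, uniformly_continuous (fun r => reim b (vhat t0 v1 r j)).
Hypothesis v_nonpos : forall y, y <= 0 -> vhat t0 v y = 0.

Local Notation x := (xsol c t0 v).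
Local Notation dx := (xsol_ds c t0 v1).

Let normr_sg_c j : `|Num.sg (c j)| = 1.
Proof. by rewrite normr_sg c_neq0. Qed.

Let divr_norm_c j : c j / `|c j| = Num.sg (c j).
Proof. by rewrite -{1}(mulr_sg_norm (c j)) mulfK // normr_eq0. Qed.

Lemma reim_xsol t s j b :
  reim b (x t s j) = Num.sg (c j) * reim b (vhat t0 v (t - delay (c j) s) j).
Proof.
rewrite /xsol /delay; have := c_neq0 j; case: ltgtP => // cj _.
  by rewrite reimB reim0 subr0 gtr0_sg // mul1r.
by rewrite reimB reim0 sub0r ltr0_sg // mulN1r.
Qed.

Lemma continuous_vhat_delay (u : R -> 'I_m -> cplx R) (a : R) t j b :
  continuous (fun r => reim b (vhat t0 u r j)) ->
  continuous (fun s => a * reim b (vhat t0 u (t - delay (c j) s) j)).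
Proof.
move=> cu; under eq_fun do rewrite sub_delay //.
apply: (continuous_affine_comp (fun r => a * reim b (vhat t0 u r j))) => r.
by apply: cvgM; [exact: cvg_cst | exact: cu].
Qed.

Lemma memLp_vhat_delay p (u : R -> 'I_m -> cplx R) (a : 'I_m -> R) t
    (f : R -> 'I_m -> cplx R) : 0 <= p ->
  (forall j b, continuous (fun r => reim b (vhat t0 u r j))) ->
  (forall s j b, reim b (f s j) = a j * reim b (vhat t0 u (t - delay (c j) s) j)) ->
  memLp p (Icc 0 1) f.
Proof.
move=> p0 cu fE.
have [|M hM] := bounded_fin_family
    (fun (jb : 'I_m * bool) r => a jb.1 * reim jb.2 (vhat t0 u r jb.1)).
  move=> [j b] /=; have := cu j b; rewrite reim_vhat => cjb.
  have [M hM] := patch_Icc_bounded t0_ge0 cjb.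
  by exists (`|a j| * M) => r; rewrite normrM reim_vhatE ler_wpM2l.
apply: (memLp_bounded p M) => // [| s _ j b]; last by rewrite fE; exact: (hM (j, b)).
apply: cm_measurable_continuous => j b; under eq_fun do rewrite fE.
exact: continuous_vhat_delay.
Qed.

Lemma memLp_xsol p t : 0 <= p -> memLp p (Icc 0 1) (x t).
Proof.
move=> p0; apply: memLp_vhat_delay p0 _ (reim_xsol t) => j b.
exact: is_derive1_continuous (v_is_derive j b).
Qed.

Lemma memLp_xsol_ds p t : 0 <= p -> memLp p (Icc 0 1) (dx t).
Proof.
move=> p0; apply: memLp_vhat_delay p0 _ (fun s j b => reimZ _ _ _) => j b.
exact: uniformly_continuous_continuous (v1_unif j b).
Qed.

Lemma xsol_primitive t : primitive_on 0 1 (x t) (dx t).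
Proof.
move=> s /andP[s_ge0 _]; apply/funext => j; apply: reim_inj => b.
pose V r := Num.sg (c j) * reim b (vhat t0 v r j).
pose w r := Num.sg (c j) * reim b (vhat t0 v1 r j).
pose tau := t - delay (c j) 0; pose k := Num.sg (c j) / `|c j|.
have xE u : reim b (x t u j) = V (tau + k * u) by rewrite reim_xsol sub_delay.
have dxE u : reim b (dx t u j) = k * w (tau + k * u).
  by rewrite reimZ sub_delay // /k /w mulrACA -expr2 sqr_sg c_neq0 mul1r.
have dV (y : R) : is_derive y 1 V (w y).
  by have dy := v_is_derive j b y; apply: is_deriveZ.
have cw : continuous (fun u => k * w (tau + k * u)).
  under eq_fun do rewrite -dxE reimZ.
  exact/continuous_vhat_delay/uniformly_continuous_continuous.
rewrite reimD reim_cintegral !xE.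
rewrite (Rintegral_Icc_derive (fun u => is_derive_affine_comp tau k u dV) cw s_ge0).
by rewrite mulr0 addr0; congr (_ + _); apply: eq_Rintegral => u _; rewrite dxE.
Qed.

Lemma cm_measurable_xsol t : cm_measurable (Icc 0 1) (x t).
Proof.
apply: cm_measurable_continuous => j b; under eq_fun do rewrite reim_xsol.
exact/continuous_vhat_delay/is_derive1_continuous.
Qed.

Lemma cm_measurable_xsol_ds t : cm_measurable (Icc 0 1) (dx t).
Proof.
apply: cm_measurable_continuous => j b; under eq_fun do rewrite reimZ.
exact/continuous_vhat_delay/uniformly_continuous_continuous.
Qed.

Lemma xsol_difference_quotient p (D : set R) t : 1 <= p ->
  Lp_pow p (Icc 0 1) (fun s j =>
      rC (t' - t)^-1 * (x t' s j - x t s j) - rC (c j) * dx t s j)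
    @[t' --> within D t^'] --> 0%E.
Proof.
move=> p1; apply: Lp_pow_cvg0 p1 _ _.
  apply: nearW => t'; apply: cm_measurableB.
    by apply/cm_measurableZ/cm_measurableB; exact: cm_measurable_xsol.
  exact/cm_measurableZ/cm_measurable_xsol_ds.
move=> e e0 j b.
have [d d0 hd] := difference_quotient_uniform (v_is_derive j b) (v1_unif j b) e e0.
refine (near_within_dnbhs d0 _) => t' t't tt' s _.
rewrite reimB !reimZ reimB !reim_xsol mulrA divr_norm_c.
set tau := t - delay (c j) s.
have -> : t' - delay (c j) s = tau + (t' - t) by rewrite /tau; ring.
rewrite -mulrBr mulrCA -mulrBr normrM normr_sg_c mul1r.
by apply: hd; rewrite ?subr_eq0 // distrC.
Qed.

Lemma xsol_ds_continuous p (D : set R) t : 1 <= p ->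
  Lp_pow p (Icc 0 1) (fun s j => rC (c j) * dx t' s j - rC (c j) * dx t s j)
    @[t' --> within D (nbhs t)] --> 0%E.
Proof.
move=> p1; apply: Lp_pow_cvg0 p1 _ _.
  apply: nearW => t'.
  by apply: cm_measurableB; exact/cm_measurableZ/cm_measurable_xsol_ds.
move=> e e0 j b; have [d d0 hd] := v1_unif j b e e0.
apply: (near_within_nbhs d0) => t' tt' s _.
rewrite reimB !reimZ !mulrA divr_norm_c -mulrBr normrM normr_sg_c mul1r ltW // hd //.
by rewrite opprB addrA subrK distrC.
Qed.

Lemma xsol_boundary t : 0 <= t <= t0 -> (forall j, t <= `|c j|^-1) ->
  (fun j => x t 1 j - x t 0 j) = v t.
Proof.
move=> tI t_le; apply/funext => j; apply: reim_inj => b.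
have V0 y : y <= 0 -> reim b (vhat t0 v y j) = 0 by move=> /v_nonpos ->; exact: reim0.
have Vt : reim b (vhat t0 v t j) = reim b (v t j) by rewrite /vhat tI.
have t_sub : t - `|c j|^-1 <= 0 by rewrite subr_le0.
rewrite reimB !reim_xsol /delay; have := c_neq0 j; case: ltgtP => // cj _.
  by rewrite subrr mul0r !subr0 div1r (V0 _ t_sub) mulr0 subr0 gtr0_sg // mul1r Vt.
by rewrite div1r mul0r subr0 (V0 _ t_sub) mulr0 sub0r ltr0_sg // mulN1r opprK Vt.
Qed.

Lemma xsol_at0 s : 0 <= s <= 1 -> x 0 s = 0.
Proof.
move=> sI; apply/funext => j; apply: reim_inj => b.
by rewrite reim_xsol v_nonpos ?reim0 ?mulr0 // sub0r oppr_le0 delay_ge0.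
Qed.

End transport.

Theorem lemma2p10 (R : realType) (m : nat) (p : R) (c : 'I_m -> R) (t0 : R)
  (v : R -> 'I_m -> cplx R) :
  1 <= p -> (forall j, c j != 0) ->
  0 < t0 -> (forall j, t0 <= `|c j|^-1) ->
  W2p0 p t0 v ->
  classical_solution p c t0 v (xsol c t0 v).
Proof.
move=> p1 c_neq0 /ltW t0_ge0 t0_le W2v.
have p_gt0 : 0 < p := lt_le_trans ltr01 p1.
have [v1 [v_der v1_unif v_nonpos]] := W2p0_vhat p1 t0_ge0 W2v.
split=> [t _ |]; first exact: (memLp_xsol c_neq0 t0_ge0 v_der _ _ (ltW p_gt0)).
exists (xsol c t0 v), (xsol_ds c t0 v1).
split; [|split; [|split; [|split]]] => [t _ | t _ | t _ | t tI |].
- split; first exact: (memLp_xsol_ds c_neq0 t0_ge0 v1_unif _ _ (ltW p_gt0)).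
  by split; [exact: xsol_primitive | exact: aeW].
- exact: xsol_difference_quotient.
- exact: xsol_ds_continuous.
- by apply: xsol_boundary => // j; case/andP: tI => _ /le_trans; apply.
- apply: Lp_pow_eq0 => [|s sI]; first by rewrite gt_eqF.
  exact: xsol_at0.
Qed.
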